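(* Suppose that $2\le n_0<\infty$, that $S$ is submultiplicative on $[1,n_0]$, and that $S(n_0)=K\ge 2$. Then there exist $N_0>n_0$ and an extension of $S$ to $[1,N_0]$ which is submultiplicative on $[1,N_0]$ and satisfies $S(N_0)\ge 3K/2$.
   Context: Let $2\le n_0\le\infty$ and let $S$ be a real-valued function on $[1,n_0]$ (on $[1,\infty)$ if $n_0=\infty$). $S$ is called submultiplicative on $[1,n_0]$ if: (a) $S$ is piecewise-linear, continuous, strictly increasing and concave; (b) $S(x)=x$ for $1\le x\le 2$; (c) $S(xy)\le S(x)S(y)$ for all $x,y$ with $1\le x,y,xy\le n_0$. *)

From Stdlib Require Import Reals Lra.
Open Scope R_scope.

Definition piecewise_linear_on (S : R -> R) (a b : R) : Prop :=
  exists (k : nat) (p : nat -> R),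
    p 0%nat = a /\ p k = b /\
    (forall i : nat, (i < k)%nat -> p i < p (Datatypes.S i)) /\
    (forall i : nat, (i < k)%nat ->
       exists m c : R, forall t : R, p i <= t <= p (Datatypes.S i) -> S t = m * t + c).

Definition continuous_on_interval (S : R -> R) (a b : R) : Prop :=
  forall x : R, a <= x <= b ->
  forall eps : R, 0 < eps -> exists delta : R, 0 < delta /\
    forall y : R, a <= y <= b -> Rabs (y - x) < delta -> Rabs (S y - S x) < eps.

Definition strictly_increasing_on (S : R -> R) (a b : R) : Prop :=
  forall x y : R, a <= x <= b -> a <= y <= b -> x < y -> S x < S y.

Definition concave_on (S : R -> R) (a b : R) : Prop :=
  forall x y t : R, a <= x <= b -> a <= y <= b -> 0 <= t <= 1 ->
    t * S x + (1 - t) * S y <= S (t * x + (1 - t) * y).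

Definition submultiplicative_on (S : R -> R) (n0 : R) : Prop :=
  piecewise_linear_on S 1 n0 /\
  continuous_on_interval S 1 n0 /\
  strictly_increasing_on S 1 n0 /\
  concave_on S 1 n0 /\
  (forall x : R, 1 <= x <= 2 -> S x = x) /\
  (forall x y : R, 1 <= x -> 1 <= y -> 1 <= x * y <= n0 -> S (x * y) <= S x * S y).

From Stdlib Require Import Reals Lra Lia Psatz.
Open Scope R_scope.

(* S is extended past n0 by the line of slope eps through (n0, S n0), where eps * n0 is a
   positive lower bound for every difference quotient of S on [1, n0]: such a bound exists
   because S is concave and its last linear piece has positive slope.  The line lies above S,
   so the glued function stays concave.  For submultiplicativity at x * y > n0: if x, y <= n0,
   compare x with n0 / y, which already gives the value S n0, and pay the remaining factor
   with the chord slope; if x > n0, then either y <= 2, where the identity S y = y suffices,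
   or the product of values is at least 2 S(n0), which the line does not exceed before
   N0 = n0 + S(n0) / (2 eps), where it equals 3 S(n0) / 2. *)

Lemma partition_le (p : nat -> R) (k : nat) :
  (forall i, (i < k)%nat -> p i < p (S i)) ->
  forall i j, (i <= j)%nat -> (j <= k)%nat -> p i <= p j.
Proof.
  intros Hinc i j Hij Hjk; induction Hij as [|j Hij IH].
  - lra.
  - specialize (IH ltac:(lia)); specialize (Hinc j ltac:(lia)); lra.
Qed.

Lemma piecewise_linear_on_ext f g a b :
  (forall t, a <= t <= b -> f t = g t) ->
  piecewise_linear_on f a b -> piecewise_linear_on g a b.
Proof.
  intros Hfg (k & p & Hp0 & Hpk & Hinc & Haff).
  exists k, p; repeat split; try assumption.
  intros i Hi; destruct (Haff i Hi) as (m & c & Hmc); exists m, c.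
  intros t Ht; rewrite <- Hfg; [now apply Hmc|].
  pose proof (partition_le p k Hinc 0 i ltac:(lia) ltac:(lia)).
  pose proof (partition_le p k Hinc (S i) k ltac:(lia) ltac:(lia)).
  lra.
Qed.

Lemma piecewise_linear_on_snoc f a b c m d :
  piecewise_linear_on f a b -> b < c ->
  (forall t, b <= t <= c -> f t = m * t + d) ->
  piecewise_linear_on f a c.
Proof.
  intros (k & p & Hp0 & Hpk & Hinc & Haff) Hbc Hlast.
  exists (S k), (fun i => if Nat.leb i k then p i else c).
  assert (Hp_le_b : forall i, (i <= k)%nat -> p i <= b).
  { intros i Hi; rewrite <- Hpk; exact (partition_le p k Hinc i k Hi (le_n k)). }
  rewrite (proj2 (Nat.leb_gt (S k) k) (Nat.lt_succ_diag_r k)).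
  repeat split; [exact Hp0| |].
  - intros i Hi; destruct (Nat.leb_spec i k) as [Hik|]; [|lia].
    destruct (Nat.leb_spec (S i) k); [now apply Hinc|].
    replace i with k by lia; lra.
  - intros i Hi; destruct (Nat.leb_spec i k) as [Hik|]; [|lia].
    destruct (Nat.leb_spec (S i) k); [now apply Haff|].
    replace i with k by lia; rewrite Hpk; exists m, d; exact Hlast.
Qed.

Lemma piecewise_linear_on_last_piece f a b :
  piecewise_linear_on f a b -> a < b ->
  exists q m c, a <= q < b /\ forall t, q <= t <= b -> f t = m * t + c.
Proof.
  intros (k & p & Hp0 & Hpk & Hinc & Haff) Hab.
  destruct k as [|k]; [rewrite Hp0 in Hpk; lra|].
  destruct (Haff k (Nat.lt_succ_diag_r k)) as (m & c & Hmc).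
  exists (p k), m, c; rewrite <- Hpk.
  rewrite <- Hp0; split; [split|exact Hmc].
  - apply (partition_le p (S k) Hinc); lia.
  - apply Hinc; lia.
Qed.

Lemma continuous_on_interval_ext f g a b :
  (forall t, a <= t <= b -> f t = g t) ->
  continuous_on_interval f a b -> continuous_on_interval g a b.
Proof.
  intros Hfg Hf x Hx e He; destruct (Hf x Hx e He) as (d & Hd & Hfd).
  exists d; split; [exact Hd|]; intros y Hy Hyx.
  rewrite <- !Hfg by assumption; now apply Hfd.
Qed.

Lemma affine_continuous_on f a b m c :
  (forall t, a <= t <= b -> f t = m * t + c) -> continuous_on_interval f a b.
Proof.
  intros Hf x Hx e He.
  pose proof (Rabs_pos m) as Hm.
  exists (e / (Rabs m + 1)); split; [apply Rdiv_lt_0_compat; lra|].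
  intros y Hy Hyx; rewrite !Hf by assumption.
  replace (m * y + c - (m * x + c)) with (m * (y - x)) by ring.
  rewrite Rabs_mult.
  apply Rmult_lt_compat_r with (r := Rabs m + 1) in Hyx; [|lra].
  replace (e / (Rabs m + 1) * (Rabs m + 1)) with e in Hyx by (field; lra).
  pose proof (Rabs_pos (y - x)); nra.
Qed.

Lemma continuous_on_interval_glue f a b c :
  a <= b -> b <= c ->
  continuous_on_interval f a b -> continuous_on_interval f b c ->
  continuous_on_interval f a c.
Proof.
  intros Hab Hbc Hl Hr x Hx e He.
  assert (He2 : 0 < e / 2) by lra.
  destruct (Rle_dec x b) as [Hxb|Hxb].
  - destruct (Hl x ltac:(lra) _ He2) as (d1 & Hd1 & H1).
    destruct (Hr b ltac:(lra) _ He2) as (d2 & Hd2 & H2).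
    exists (Rmin d1 d2); split; [now apply Rmin_pos|].
    intros y Hy Hyx; apply Rabs_def2 in Hyx.
    pose proof (Rmin_l d1 d2); pose proof (Rmin_r d1 d2).
    destruct (Rle_dec y b).
    + assert (Rabs (f y - f x) < e / 2) by (apply H1; [lra|apply Rabs_def1; lra]); lra.
    + (* y and x lie on opposite sides of b: pass through f b *)
      assert (Hyb : Rabs (f y - f b) < e / 2) by (apply H2; [lra|apply Rabs_def1; lra]).
      assert (Hbx : Rabs (f b - f x) < e / 2) by (apply H1; [lra|apply Rabs_def1; lra]).
      apply Rabs_def2 in Hyb, Hbx; apply Rabs_def1; lra.
  - destruct (Hr x ltac:(lra) _ He2) as (d1 & Hd1 & H1).
    destruct (Hl b ltac:(lra) _ He2) as (d2 & Hd2 & H2).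
    exists (Rmin d1 d2); split; [now apply Rmin_pos|].
    intros y Hy Hyx; apply Rabs_def2 in Hyx.
    pose proof (Rmin_l d1 d2); pose proof (Rmin_r d1 d2).
    destruct (Rle_dec b y).
    + assert (Rabs (f y - f x) < e / 2) by (apply H1; [lra|apply Rabs_def1; lra]); lra.
    + assert (Hyb : Rabs (f y - f b) < e / 2) by (apply H2; [lra|apply Rabs_def1; lra]).
      assert (Hbx : Rabs (f b - f x) < e / 2) by (apply H1; [lra|apply Rabs_def1; lra]).
      apply Rabs_def2 in Hyb, Hbx; apply Rabs_def1; lra.
Qed.

Lemma concave_on_three_point f lo hi a b c :
  concave_on f lo hi -> lo <= a -> a < c -> c <= hi -> a <= b <= c ->
  (c - b) * f a + (b - a) * f c <= (c - a) * f b.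
Proof.
  intros Hf Ha Hac Hc Hb.
  set (t := (c - b) / (c - a)).
  assert (Htca : t * (c - a) = c - b) by (unfold t; field; lra).
  assert (Ht : 0 <= t <= 1) by (split; nra).
  pose proof (Hf a c t ltac:(lra) ltac:(lra) Ht) as H.
  replace (t * a + (1 - t) * c) with b in H by (unfold t; field; lra).
  replace ((c - b) * f a + (b - a) * f c) with ((c - a) * (t * f a + (1 - t) * f c))
    by (unfold t; field; lra).
  apply Rmult_le_compat_l; lra.
Qed.

Lemma strictly_increasing_on_le f lo hi x y :
  strictly_increasing_on f lo hi -> lo <= x -> x <= y -> y <= hi -> f x <= f y.
Proof.
  intros Hf Hx Hxy Hy; destruct (Req_dec x y) as [->|]; [lra|].
  left; apply Hf; lra.
Qed.

Lemma piecewise_linear_concave_slope_lower_bound f lo hi :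
  lo < hi -> piecewise_linear_on f lo hi -> concave_on f lo hi ->
  strictly_increasing_on f lo hi ->
  exists m, 0 < m /\ forall a x, lo <= a -> a <= x -> x <= hi -> m * (x - a) <= f x - f a.
Proof.
  intros Hlohi Hpl Hcc Hinc.
  destruct (piecewise_linear_on_last_piece f lo hi Hpl Hlohi) as (q & m & c & Hq & Hlast).
  assert (Hfq : f q = m * q + c) by (apply Hlast; lra).
  assert (Hfhi : f hi = m * hi + c) by (apply Hlast; lra).
  assert (Hm : 0 < m).
  { assert (f q < f hi) by (apply Hinc; lra).
    apply (Rmult_lt_reg_r (hi - q)); nra. }
  (* g := f - m id is concave and constant on [q, hi], hence nondecreasing *)
  assert (Hmax : forall a, lo <= a <= hi -> f a - m * a <= f hi - m * hi).
  { intros a Ha; destruct (Rle_dec q a).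
    - rewrite (Hlast a) by lra; lra.
    - pose proof (concave_on_three_point f lo hi a q hi Hcc ltac:(lra) ltac:(lra) ltac:(lra)
        ltac:(lra)); nra. }
  exists m; split; [exact Hm|]; intros a x Ha Hax Hx.
  destruct (Req_dec a hi) as [->|]; [replace x with hi by lra; lra|].
  pose proof (concave_on_three_point f lo hi a x hi Hcc Ha ltac:(lra) ltac:(lra) ltac:(lra)).
  pose proof (Hmax a ltac:(lra)).
  assert (Hg : (hi - a) * (f a - m * a) <= (hi - a) * (f x - m * x)) by nra.
  apply Rmult_le_reg_l in Hg; lra.
Qed.

Section LinearExtension.

Variables (S : R -> R) (n0 eps : R).
Hypotheses (Hn0 : 2 <= n0) (Heps : 0 < eps).
Hypotheses (Hpl : piecewise_linear_on S 1 n0) (Hcont : continuous_on_interval S 1 n0)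
  (Hinc : strictly_increasing_on S 1 n0) (Hcc : concave_on S 1 n0)
  (Hid : forall x, 1 <= x <= 2 -> S x = x)
  (Hsm : forall x y, 1 <= x -> 1 <= y -> 1 <= x * y <= n0 -> S (x * y) <= S x * S y).
Hypothesis Hslope : forall a x, 1 <= a -> a <= x -> x <= n0 -> eps * n0 * (x - a) <= S x - S a.

Definition linear_extension (x : R) : R :=
  if Rle_dec x n0 then S x else S n0 + eps * (x - n0).

Lemma linear_extension_le x : x <= n0 -> linear_extension x = S x.
Proof. intros; unfold linear_extension; destruct Rle_dec; lra. Qed.

Lemma linear_extension_ge x : n0 <= x -> linear_extension x = S n0 + eps * (x - n0).
Proof.
  intros; unfold linear_extension; destruct Rle_dec; [replace x with n0 by lra|]; lra.
Qed.

Lemma eps_n0_le_1 : eps * n0 <= 1.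
Proof.
  pose proof (Hslope 1 2); pose proof (Hid 1); pose proof (Hid 2); lra.
Qed.

Lemma two_le_S_n0 : 2 <= S n0.
Proof.
  pose proof (Hid 2); pose proof (strictly_increasing_on_le S 1 n0 2 n0 Hinc); lra.
Qed.

Lemma S_below_tangent x : 1 <= x <= n0 -> S x + eps * (n0 - x) <= S n0.
Proof.
  intros Hx; pose proof (Hslope x n0 ltac:(lra) ltac:(lra) ltac:(lra)).
  assert (0 <= (n0 - 1) * (eps * (n0 - x))) by (apply Rmult_le_pos; nra).
  lra.
Qed.

Lemma linear_extension_le_tangent x : 1 <= x -> linear_extension x <= S n0 + eps * (x - n0).
Proof.
  intros Hx; destruct (Rle_dec x n0).
  - rewrite linear_extension_le by lra; pose proof (S_below_tangent x); lra.
  - rewrite linear_extension_ge; lra.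
Qed.

Lemma linear_extension_increasing x y : 1 <= x -> x < y -> linear_extension x < linear_extension y.
Proof.
  intros Hx Hxy; destruct (Rle_dec y n0).
  - rewrite !linear_extension_le by lra; apply Hinc; lra.
  - rewrite (linear_extension_ge y) by lra.
    pose proof (linear_extension_le_tangent x Hx); nra.
Qed.

Lemma linear_extension_concave_across x y t :
  1 <= x <= n0 -> n0 <= y -> 0 <= t <= 1 ->
  t * linear_extension x + (1 - t) * linear_extension y
    <= linear_extension (t * x + (1 - t) * y).
Proof.
  intros Hx Hy Ht; set (z := t * x + (1 - t) * y).
  rewrite (linear_extension_ge y) by lra.
  destruct (Rle_dec n0 z).
  - rewrite (linear_extension_ge z) by lra.
    pose proof (linear_extension_le_tangent x ltac:(lra)).
    unfold z; nra.
  - rewrite (linear_extension_le x), (linear_extension_le z) by lra.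
    (* the chord inequality of S on x <= z <= n0, once the part of y beyond n0
       is traded for the tangent slope; the coefficients then match exactly *)
    assert (Hxz : x <= z) by (unfold z; nra).
    pose proof (concave_on_three_point S 1 n0 x z n0 Hcc ltac:(lra) ltac:(lra) ltac:(lra)
      ltac:(lra)) as Hchord.
    pose proof (S_below_tangent x Hx).
    assert (Hw : 0 <= (1 - t) * (y - n0)) by nra.
    assert ((1 - t) * (y - n0) * (eps * (n0 - x)) <= (1 - t) * (y - n0) * (S n0 - S x))
      by (apply Rmult_le_compat_l; lra).
    apply (Rmult_le_reg_l (n0 - x)); [lra|]; unfold z in *; nra.
Qed.

Lemma linear_extension_concave N0 : concave_on linear_extension 1 N0.
Proof.
  intros x y t Hx Hy Ht.
  destruct (Rle_dec x n0), (Rle_dec y n0).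
  - rewrite !linear_extension_le by nra; apply Hcc; lra.
  - apply linear_extension_concave_across; lra.
  - replace (t * x + (1 - t) * y) with ((1 - t) * y + (1 - (1 - t)) * x) by ring.
    pose proof (linear_extension_concave_across y x (1 - t)); lra.
  - rewrite !linear_extension_ge by nra; nra.
Qed.

Lemma linear_extension_submult_le_n0 x y :
  1 <= x <= n0 -> 1 <= y <= n0 ->
  linear_extension (x * y) <= linear_extension x * linear_extension y.
Proof.
  intros Hx Hy; rewrite (linear_extension_le x), (linear_extension_le y) by lra.
  destruct (Rle_dec (x * y) n0).
  - rewrite linear_extension_le by lra; apply Hsm; nra.
  - rewrite linear_extension_ge by lra.
    (* compare with x' = n0 / y, for which S x' * S y >= S (x' * y) = S n0 *)
    set (x' := n0 / y).
    assert (Hx'y : x' * y = n0) by (unfold x'; field; lra).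
    assert (Hx'1 : 1 <= x') by (apply (Rmult_le_reg_r y); lra).
    assert (Hx'x : x' <= x) by (apply (Rmult_le_reg_r y); lra).
    pose proof (Hsm x' y Hx'1 ltac:(lra) ltac:(lra)) as Hx'_sm; rewrite Hx'y in Hx'_sm.
    pose proof (Hslope x' x Hx'1 Hx'x ltac:(lra)) as Hx'_slope.
    assert (HSy : 1 <= S y).
    { pose proof (Hid 1); pose proof (strictly_increasing_on_le S 1 n0 1 y Hinc); lra. }
    assert (Hmul : eps * (x * y - n0) <= eps * n0 * (x - x')).
    { replace (x * y - n0) with (y * (x - x')) by (rewrite <- Hx'y; ring).
      assert (0 <= eps * (x - x')) by nra; nra. }
    assert (eps * n0 * (x - x') <= (S x - S x') * S y).
    { assert (0 <= eps * n0 * (x - x')) by (apply Rmult_le_pos; nra); nra. }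
    nra.
Qed.

Lemma linear_extension_submult_gt_n0 x y :
  n0 < x -> 1 <= y -> eps * (x * y - n0) <= S n0 ->
  linear_extension (x * y) <= linear_extension x * linear_extension y.
Proof.
  intros Hx Hy Hxy.
  pose proof two_le_S_n0; pose proof eps_n0_le_1.
  rewrite (linear_extension_ge x), (linear_extension_ge (x * y)) by nra.
  destruct (Rle_dec y 2).
  - rewrite linear_extension_le, (Hid y) by lra.
    assert (0 <= (y - 1) * (S n0 - eps * n0)) by (apply Rmult_le_pos; lra); nra.
  - assert (2 <= linear_extension y).
    { rewrite <- (Hid 2) by lra; rewrite <- (linear_extension_le 2) by lra.
      left; apply linear_extension_increasing; lra. }
    assert (0 <= eps * (x - n0)) by nra; nra.
Qed.

Lemma linear_extension_submultiplicative N0 :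
  n0 < N0 -> eps * (N0 - n0) <= S n0 -> submultiplicative_on linear_extension N0.
Proof.
  intros HN0 HN0_le.
  assert (Hagree : forall t, 1 <= t <= n0 -> S t = linear_extension t)
    by (intros; rewrite linear_extension_le; lra).
  assert (Haffine : forall t, n0 <= t <= N0 ->
    linear_extension t = eps * t + (S n0 - eps * n0))
    by (intros; rewrite linear_extension_ge; lra).
  repeat split.
  - apply (piecewise_linear_on_snoc _ 1 n0 N0 eps (S n0 - eps * n0)); [|lra|exact Haffine].
    exact (piecewise_linear_on_ext S _ 1 n0 Hagree Hpl).
  - apply (continuous_on_interval_glue _ 1 n0 N0); [lra|lra| |].
    + exact (continuous_on_interval_ext S _ 1 n0 Hagree Hcont).
    + exact (affine_continuous_on _ n0 N0 _ _ Haffine).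
  - intros x y Hx Hy Hxy; apply linear_extension_increasing; lra.
  - apply linear_extension_concave.
  - intros x Hx; rewrite linear_extension_le, Hid; lra.
  - intros x y Hx Hy Hxy.
    assert (x <= x * y /\ y <= x * y) as [] by (split; nra).
    destruct (Rle_dec x n0), (Rle_dec y n0).
    + apply linear_extension_submult_le_n0; lra.
    + rewrite Rmult_comm, (Rmult_comm (linear_extension x)).
      apply linear_extension_submult_gt_n0; nra.
    + apply linear_extension_submult_gt_n0; nra.
    + apply linear_extension_submult_gt_n0; nra.
Qed.

End LinearExtension.

Theorem lemma2p4 (n0 : R) (S : R -> R) (K : R) :
  2 <= n0 ->
  submultiplicative_on S n0 ->
  S n0 = K -> 2 <= K ->
  exists (N0 : R) (S' : R -> R),
    n0 < N0 /\
    (forall x : R, 1 <= x <= n0 -> S' x = S x) /\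
    submultiplicative_on S' N0 /\
    3 * K / 2 <= S' N0.
Proof.
  intros Hn0 HS HK HK2.
  destruct HS as (Hpl & Hcont & Hinc & Hcc & Hid & Hsm).
  destruct (piecewise_linear_concave_slope_lower_bound S 1 n0 ltac:(lra) Hpl Hcc Hinc)
    as (m & Hm & Hslope).
  set (eps := m / n0).
  assert (Heps : 0 < eps) by (apply Rdiv_lt_0_compat; lra).
  assert (Heps_n0 : eps * n0 = m) by (unfold eps; field; lra).
  set (N0 := n0 + K / (2 * eps)).
  assert (HN0 : eps * (N0 - n0) = K / 2) by (unfold N0; field; lra).
  assert (n0 < N0) by (unfold N0; assert (0 < K / (2 * eps)) by
    (apply Rdiv_lt_0_compat; lra); lra).
  exists N0, (linear_extension S n0 eps).
  split; [assumption|split; [|split]].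
  - intros x Hx; apply linear_extension_le; lra.
  - apply linear_extension_submultiplicative; try assumption; [|lra].
    intros a x Ha Hax Hx; rewrite Heps_n0; auto.
  - rewrite linear_extension_ge; lra.
Qed.
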